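(* Let $G$ be a transitive permutation group on a finite set $\Omega$, let $N$ be a normal subgroup of $G$ such that the set $\Omega/N=\{\omega^N:\omega\in\Omega\}$ of $N$-orbits has at least $2$ elements, and let $G\circlearrowright\Omega/N$ denote the permutation group induced by the natural action of $G$ on $\Omega/N$. Then \[ \mathbf{m}(G)\ge\mathbf{m}(G\circlearrowright\Omega/N). \]
   Context: For a transitive permutation group $X$ on a finite set $\Sigma$ with $|\Sigma|\ge2$, a subset $A\subseteq\Sigma$ is self-separable for $X$ if there exists $x\in X$ with $A\cap A^x=\emptyset$; $\mathbf{m}(X)$ is the minimum cardinality of a subset of $\Sigma$ that is not self-separable for $X$. *)

From mathcomp Require Import all_boot all_fingroup.
Set Implicit Arguments. Unset Strict Implicit. Unset Printing Implicit Defensive.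
Import GroupScope.

Definition self_separable (aT : finGroupType) (D : {set aT}) (rT : finType)
  (to : action D rT) (G : {set aT}) (A : {set rT}) : bool :=
  [exists x in G, [disjoint A & to^* A x]].

(* m(X): minimum cardinality of a subset of Sigma that is not self-separable
   for the group induced by [G] on Sigma via [to].  (Sigma itself is never
   self-separable when nonempty, so the minimum is attained; #|Sigma| is only
   the default value of the fold.) *)
Definition mnum (aT : finGroupType) (D : {set aT}) (rT : finType)
  (to : action D rT) (G : {set aT}) (Sigma : {set rT}) : nat :=
  \big[minn/#|Sigma|]_(A : {set rT} | (A \subset Sigma) && ~~ self_separable to G A) #|A|.

Definition orbits_set (T : finType) (N : {set {perm T}}) : {set {set T}} :=
  [set orbit 'P N x | x : T].

From mathcomp Require Import all_boot all_order all_fingroup.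
Set Implicit Arguments. Unset Strict Implicit. Unset Printing Implicit Defensive.
Import GroupScope Order.TTheory.

(* Projecting a set that is not self-separable onto the N-orbits cannot make it
   self-separable, because G permutes the N-orbits: if B is the set of orbits
   meeting A and B^g is disjoint from B, then A^g is disjoint from A.  The
   projection does not increase cardinality, and Omega/N is no larger than
   Omega, so the minimum defining m can only drop. *)

Section MinimalNonSeparable.

Variables (aT : finGroupType) (D : {set aT}) (rT : finType).
Variables (to : action D rT) (G : {set aT}) (Sigma : {set rT}).

Lemma mnum_geP n :
  reflect (n <= #|Sigma| /\
           forall A : {set rT}, A \subset Sigma -> ~~ self_separable to G A -> n <= #|A|)
          (n <= mnum to G Sigma).
Proof.
rewrite /mnum -minEnat -leEnat.
apply: (iffP (bigmin_geP _ _ _ _)) => -[le_n_Sigma le_n_A]; split=> //.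
- by move=> A sA nsA; apply: le_n_A; rewrite sA.
- by move=> A /andP [sA nsA]; apply: le_n_A.
Qed.

Lemma mnum_le_card : mnum to G Sigma <= #|Sigma|.
Proof. by case/mnum_geP: (leqnn (mnum to G Sigma)). Qed.

Lemma mnum_le (A : {set rT}) :
  A \subset Sigma -> ~~ self_separable to G A -> mnum to G Sigma <= #|A|.
Proof. by case/mnum_geP: (leqnn (mnum to G Sigma)) => _; apply. Qed.

End MinimalNonSeparable.

Lemma self_separable_orbit_imset (aT : finGroupType) (rT : finType)
    (to : {action aT &-> rT}) (G N : {set aT}) (A : {set rT}) :
  G \subset 'N(N) ->
  self_separable to^* G (orbit to N @: A) -> self_separable to G A.
Proof.
move=> nNG /existsP [g /andP [Gg disjB]]; apply/existsP; exists g; rewrite Gg /=.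
apply/pred0P => a /=; apply/negbTE/andP => -[Aa /imsetP [b Ab def_a]].
have orbit_bg : orbit to N (to b g) = to^* (orbit to N b) g.
  by rewrite setact_orbit (normsP nNG g Gg).
have : orbit to N (to b g) \in to^*^* (orbit to N @: A) g.
  by rewrite orbit_bg; apply: imset_f; apply: imset_f.
by rewrite -def_a (disjointFr disjB) // imset_f.
Qed.

Theorem lemma3p2 (T : finType) (G N : {group {perm T}}) :
  [transitive G, on [set: T] | 'P] ->
  N <| G ->
  2 <= #|orbits_set N| ->
  mnum ('P^*)%act G (orbits_set N) <= mnum 'P G [set: T].
Proof.
move=> _ /andP [_ nNG] _.
apply/mnum_geP; split.
  apply: leq_trans (mnum_le_card _ _ _) _.
  by rewrite cardsT; apply: leq_imset_card.
move=> A _ nsA; apply: leq_trans (leq_imset_card (orbit 'P N) A).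
apply: mnum_le; first exact: imsetS (subset_predT A).
by apply: contra nsA; apply: self_separable_orbit_imset.
Qed.
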